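(* Let $a,b$ be complex numbers such that $j^2-aj-b^2\neq 0$ for every positive integer $j$. Then $$\sum_{k=1}^{\infty}\frac{1}{k^2-ak-b^2}=\sum_{k=1}^{\infty}\frac{3k-a}{k\binom{2k}{k}}\cdot\frac{\prod_{j=1}^{k-1}(j^2-a^2-4b^2)}{\prod_{j=1}^{k}(j^2-aj-b^2)}.$$
   Context: The left-hand side equals the generating function $\sum_{r\ge0}\sum_{s\ge0}\binom{r+s}{r}\zeta(2+r+2s)a^rb^{2s}$ for small $|a|,|b|$. *)

From Stdlib Require Import Reals.
From Coquelicot Require Import Coquelicot.
Open Scope C_scope.

Definition natC (n : nat) : C := RtoC (INR n).

Fixpoint prodC (f : nat -> C) (n : nat) : C :=
  match n with
  | O => 1
  | S m => prodC f m * f (S m)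
  end.

Definition qden (a b : C) (j : nat) : C :=
  natC j * natC j - a * natC j - b * b.

Definition lhs_term (a b : C) (k : nat) : C := / qden a b k.

Definition rhs_term (a b : C) (k : nat) : C :=
  (3 * natC k - a) / (natC k * RtoC (Binomial.C (2 * k) k))
  * prodC (fun j => natC j * natC j - a * a - 4 * (b * b)) (k - 1)
  / prodC (qden a b) k.

(* Markov–WZ acceleration.  Index the left-hand series by k >= 0, with terms 1/q(k+1),
   where q(j) = j^2 - a j - b^2 and p(j) = j^2 - a^2 - 4 b^2, and put
     F(n,k) = c_n / (q(k+1) ... q(k+n+1)),   c_n = p(1) ... p(n) / binom(2n,n),
     G(n,k) = F(n,k) (2k + 3n + 3 - a) / (2(2n+1)).
   Then F(0,k) is the k-th left-hand term, G(n,0) the n-th right-hand term, and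
   F(n,k) - F(n+1,k) = G(n,k) - G(n,k+1): after division by F(n,k) this is a polynomial
   identity.  Summing over k <= K and n <= K and telescoping twice, the K-th partial sums
   of the two series differ by sum_{n<=K} G(n,K+1) - sum_{k<=K} F(K+1,k).
   Since F(n+1,k)/F(n,k) = (n+1)/(2(2n+1)) p(n+1)/q(k+n+2) has modulus at most 2/3 once n
   is large, uniformly in k, we get |F(n,k)| <= D (2/3)^n / |q(k+1)|; together with
   |q(i)| >= m i(i+1) the first error is O(1/K) and the second O((2/3)^K). *)

From Stdlib Require Import Reals Lia Lra.
From Coquelicot Require Import Coquelicot.
Open Scope C_scope.

Lemma sum_n_telescope {G : AbelianGroup} (u : nat -> G) N :
  sum_n (fun n => minus (u n) (u (S n))) N = minus (u O) (u (S N)).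
Proof.
  induction N as [|N IH].
  - now rewrite sum_O.
  - rewrite sum_Sn, IH. unfold minus.
    rewrite <- plus_assoc, (plus_assoc (opp _)), plus_opp_l, plus_zero_l. reflexivity.
Qed.

Lemma sum_n_Cminus (u v : nat -> C) N :
  sum_n (fun k => u k - v k) N = sum_n u N - sum_n v N.
Proof.
  induction N as [|N IH].
  - now rewrite !sum_O.
  - rewrite !sum_Sn, IH.
    change (AbelianMonoid.sort C_AbelianMonoid) with C.
    change (@plus C_AbelianMonoid) with Cplus. ring.
Qed.

Lemma Cmod_sum_n_le (u : nat -> C) (v : nat -> R) N :
  (forall n, (n <= N)%nat -> (Cmod (u n) <= v n)%R) -> (Cmod (sum_n u N) <= sum_n v N)%R.
Proof.
  induction N as [|N IH]; intros Huv.
  - rewrite !sum_O. apply Huv. lia.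
  - rewrite !sum_Sn. eapply Rle_trans; [apply Cmod_triangle|].
    apply Rplus_le_compat; [apply IH; intros; apply Huv | apply Huv]; lia.
Qed.

Lemma Cmod_sub_ge (x y : C) : (Cmod x - Cmod y <= Cmod (x - y))%R.
Proof.
  pose proof (Cmod_triangle (x - y) y) as H.
  replace (x - y + y) with x in H by ring. lra.
Qed.

Lemma Cmod_sub_le (x y : C) : (Cmod (x - y) <= Cmod x + Cmod y)%R.
Proof. pose proof (Cmod_triangle x (- y)) as H. rewrite Cmod_opp in H. exact H. Qed.

Lemma RtoC_neq0 (x : R) : x <> 0%R -> RtoC x <> 0.
Proof. intros Hx H. apply Hx. exact (f_equal Re H). Qed.

Lemma natC_S n : natC (S n) = natC n + 1.
Proof. unfold natC. rewrite S_INR, <- RtoC_plus. reflexivity. Qed.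

Lemma natC_add m n : natC (m + n) = natC m + natC n.
Proof. unfold natC. rewrite plus_INR, <- RtoC_plus. reflexivity. Qed.

Lemma Cmod_natC j : Cmod (natC j) = INR j.
Proof. unfold natC. rewrite Cmod_R. apply Rabs_pos_eq, pos_INR. Qed.

Lemma odd_natC_neq0 n : 2 * natC n + 1 <> 0.
Proof.
  replace (2 * natC n + 1) with (RtoC (2 * INR n + 1))
    by (unfold natC; rewrite RtoC_plus, RtoC_mult; reflexivity).
  apply RtoC_neq0. pose proof (pos_INR n). lra.
Qed.

Lemma prodC_neq0 (f : nat -> C) n :
  (forall j, (1 <= j)%nat -> f j <> 0) -> prodC f n <> 0.
Proof.
  intros Hf. induction n as [|n IH]; simpl.
  - apply RtoC_neq0. lra.
  - apply Cmult_neq_0; [exact IH | apply Hf; lia].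
Qed.

Lemma filterlim_C_of_dist_le (s t : nat -> C) (l : C) (e : nat -> R) :
  filterlim t eventually (locally l) ->
  (forall N, (Cmod (s N - t N) <= e N)%R) -> is_lim_seq e 0%R ->
  filterlim s eventually (locally l).
Proof.
  intros Ht Hst He.
  assert (Hd : filterlim (fun N => s N - t N) eventually (locally (zero : C))).
  { apply (filterlim_norm_zero (V := C_NormedModule)).
    change (is_lim_seq (fun N => Cmod (s N - t N)) 0%R).
    apply (is_lim_seq_le_le (fun _ => 0%R) _ e); [|apply is_lim_seq_const | exact He].
    intros N. split; [apply Cmod_ge_0 | apply Hst]. }
  apply (filterlim_ext (fun N => plus (t N) (s N - t N))).
  { intros N. change (t N + (s N - t N) = s N). ring. }
  replace l with (plus l zero) by (change (l + 0 = l); ring).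
  exact (filterlim_comp_2 _ _ _ Ht Hd (filterlim_plus l zero)).
Qed.

Section RealSequences.
Local Open Scope R_scope.

Lemma pos_lower_bound_of_eventually (f : nat -> R) (J : nat) (c : R) :
  0 < c -> (forall i, (1 <= i)%nat -> 0 < f i) -> (forall i, (J <= i)%nat -> c <= f i) ->
  exists m, 0 < m /\ forall i, (1 <= i)%nat -> m <= f i.
Proof.
  revert c. induction J as [|J IH]; intros c Hc Hpos Hev.
  - exists c. split; [exact Hc | intros i _; apply Hev; lia].
  - destruct (Nat.eq_dec J 0) as [->|HJ].
    + exists c. split; [exact Hc | intros i Hi; apply Hev; lia].
    + apply (IH (Rmin c (f J))).
      * apply Rmin_glb_lt; [exact Hc | apply Hpos; lia].
      * exact Hpos.
      * intros i Hi. destruct (Nat.eq_dec i J) as [->|Hne].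
        -- apply Rmin_r.
        -- eapply Rle_trans; [apply Rmin_l | apply Hev; lia].
Qed.

Lemma geometric_decay_after (x : nat -> R) (M r : R) (J : nat) :
  0 < r -> r <= M -> (forall n, 0 <= x n) ->
  (forall n, (n < J)%nat -> x (S n) <= M * x n) ->
  (forall n, (J <= n)%nat -> x (S n) <= r * x n) ->
  forall n, x n <= (M / r) ^ J * r ^ n * x O.
Proof.
  intros Hr HrM Hx Hsmall Hlarge.
  assert (Hmin : forall n, x n <= (M / r) ^ Nat.min n J * r ^ n * x O).
  { induction n as [|n IH].
    - simpl. lra.
    - destruct (Nat.lt_ge_cases n J) as [HnJ|HnJ].
      + replace (Nat.min (S n) J) with (S (Nat.min n J)) by lia.
        replace ((M / r) ^ S (Nat.min n J) * r ^ S n * x O)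
          with (M * ((M / r) ^ Nat.min n J * r ^ n * x O)) by (simpl; field; lra).
        eapply Rle_trans; [apply Hsmall, HnJ|].
        apply Rmult_le_compat_l; [lra | exact IH].
      + replace (Nat.min (S n) J) with (Nat.min n J) by lia.
        replace ((M / r) ^ Nat.min n J * r ^ S n * x O)
          with (r * ((M / r) ^ Nat.min n J * r ^ n * x O)) by (simpl; ring).
        eapply Rle_trans; [apply Hlarge, HnJ|].
        apply Rmult_le_compat_l; [lra | exact IH]. }
  intros n. eapply Rle_trans; [apply Hmin|].
  apply Rmult_le_compat_r; [apply Hx|]. apply Rmult_le_compat_r; [apply pow_le; lra|].
  apply Rle_pow; [|lia].
  apply (Rmult_le_reg_r r); [exact Hr|]. unfold Rdiv. rewrite Rmult_assoc, Rinv_l; lra.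
Qed.

Lemma sum_n_geom_le (r X : R) N : 0 <= r < 1 -> 0 <= X ->
  sum_n (fun n => r ^ n * X) N <= X / (1 - r).
Proof.
  intros Hr HX.
  transitivity (sum_n (fun n => r ^ n) N * X); [exact (Req_le _ _ (sum_n_mult_r X _ N))|].
  rewrite Rmult_comm. unfold Rdiv. apply Rmult_le_compat_l; [exact HX|].
  rewrite sum_n_Reals, tech3 by lra.
  pose proof (pow_le r (S N) (proj1 Hr)).
  rewrite <- (Rmult_1_l (/ (1 - r))). unfold Rdiv.
  apply Rmult_le_compat_r; [apply Rlt_le, Rinv_0_lt_compat |]; lra.
Qed.

Lemma inv_succ_gap k : / (INR (S k) * INR (S (S k))) = / INR (S k) - / INR (S (S k)).
Proof. rewrite !S_INR. pose proof (pos_INR k). field. split; lra. Qed.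

Lemma sum_n_inv_succ_gap N :
  sum_n (fun k => / INR (S k) - / INR (S (S k))) N = 1 - / INR (S (S N)).
Proof.
  transitivity (minus (/ INR 1) (/ INR (S (S N)))).
  - exact (sum_n_telescope (fun k => / INR (S k)) N).
  - simpl INR at 1. rewrite Rinv_1. reflexivity.
Qed.

Lemma is_lim_seq_inv_INR_S : is_lim_seq (fun n => / INR (S n)) 0.
Proof.
  replace (Finite 0) with (Rbar_inv p_infty) by reflexivity.
  apply is_lim_seq_inv; [|discriminate].
  apply (is_lim_seq_incr_1 INR), is_lim_seq_INR.
Qed.

Lemma is_series_inv_succ_gap : is_series (fun k => / INR (S k) - / INR (S (S k))) 1.
Proof.
  unfold is_series. eapply filterlim_ext; [intros N; symmetry; apply sum_n_inv_succ_gap|].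
  change (is_lim_seq (fun N => 1 - / INR (S (S N))) 1).
  replace (Finite 1) with (Finite (1 - 0)) by (f_equal; ring).
  apply is_lim_seq_minus'; [apply is_lim_seq_const|].
  apply (is_lim_seq_incr_1 (fun n => / INR (S n))), is_lim_seq_inv_INR_S.
Qed.

End RealSequences.

Definition cbin_ratio (n : nat) : R := INR (S n) / (2 * (2 * INR n + 1)).

Lemma central_binomial_S n :
  (Binomial.C (2 * S n) (S n) * cbin_ratio n = Binomial.C (2 * n) n)%R.
Proof.
  unfold Binomial.C, cbin_ratio.
  replace (2 * S n - S n)%nat with (S n) by lia.
  replace (2 * n - n)%nat with n by lia.
  replace (2 * S n)%nat with (S (S (2 * n))) by lia.
  rewrite !fact_simpl, !mult_INR, !S_INR, mult_INR. simpl INR.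
  pose proof (INR_fact_neq_0 n). pose proof (INR_fact_neq_0 (2 * n)).
  pose proof (pos_INR n).
  field. repeat split; auto; lra.
Qed.

Lemma central_binomial_pos n : (0 < Binomial.C (2 * n) n)%R.
Proof.
  unfold Binomial.C. apply Rdiv_lt_0_compat; [apply INR_fact_lt_0|].
  apply Rmult_lt_0_compat; apply INR_fact_lt_0.
Qed.

Lemma cbin_ratio_pos n : (0 < cbin_ratio n)%R.
Proof.
  unfold cbin_ratio. pose proof (pos_INR n). rewrite S_INR.
  apply Rdiv_lt_0_compat; lra.
Qed.

Lemma cbin_ratio_le_half n : (cbin_ratio n <= 1 / 2)%R.
Proof.
  unfold cbin_ratio. rewrite S_INR. pose proof (pos_INR n).
  apply (Rmult_le_reg_r (2 * (2 * INR n + 1))); [lra|]. field_simplify; lra.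
Qed.

Lemma cbin_ratio_le_third n : (1 <= n)%nat -> (cbin_ratio n <= 1 / 3)%R.
Proof.
  intros Hn. apply le_INR in Hn. simpl in Hn.
  unfold cbin_ratio. rewrite S_INR.
  apply (Rmult_le_reg_r (2 * (2 * INR n + 1))); [lra|]. field_simplify; lra.
Qed.

Lemma RtoC_cbin_ratio n : RtoC (cbin_ratio n) = natC (S n) / (2 * (2 * natC n + 1)).
Proof.
  unfold cbin_ratio, natC. pose proof (pos_INR n).
  rewrite RtoC_div by lra. rewrite !RtoC_mult, RtoC_plus, RtoC_mult. reflexivity.
Qed.

Definition pnum (a b : C) (j : nat) : C := natC j * natC j - a * a - 4 * (b * b).

Definition wz_coef (a b : C) (n : nat) : C :=
  prodC (pnum a b) n / RtoC (Binomial.C (2 * n) n).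

Definition wzF (a b : C) (n k : nat) : C :=
  wz_coef a b n * prodC (qden a b) k / prodC (qden a b) (k + S n).

Definition wz_cert (a : C) (n k : nat) : C :=
  (2 * natC k + 3 * natC n + 3 - a) / (2 * (2 * natC n + 1)).

Definition wzG (a b : C) (n k : nat) : C := wzF a b n k * wz_cert a n k.

Lemma wz_coef_S a b n :
  wz_coef a b (S n) = wz_coef a b n * (RtoC (cbin_ratio n) * pnum a b (S n)).
Proof.
  unfold wz_coef. simpl prodC.
  rewrite <- (central_binomial_S n), RtoC_mult.
  pose proof (central_binomial_pos (S n)). pose proof (cbin_ratio_pos n).
  field. split; apply RtoC_neq0; lra.
Qed.

Lemma wz_certificate a b n k :
  2 * (2 * natC n + 1) * qden a b (S (k + S n)) - natC (S n) * pnum a b (S n)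
  = (2 * natC k + 3 * natC n + 3 - a) * qden a b (S (k + S n))
    - (2 * natC (S k) + 3 * natC n + 3 - a) * qden a b (S k).
Proof. unfold qden, pnum. rewrite !natC_S, natC_add, natC_S. ring. Qed.

Section WZPair.
Variables a b : C.
Hypothesis hab : forall j : nat, (1 <= j)%nat -> qden a b j <> 0.

Lemma wzF_0 k : wzF a b 0 k = lhs_term a b (S k).
Proof.
  unfold wzF, wz_coef, lhs_term. replace (k + 1)%nat with (S k) by lia. simpl prodC.
  assert (prodC (qden a b) k <> 0) by (apply prodC_neq0; exact hab).
  assert (qden a b (S k) <> 0) by (apply hab; lia).
  rewrite C_n_n. field. split; assumption.
Qed.

Lemma wzG_0 n : wzG a b n 0 = rhs_term a b (S n).
Proof.
  unfold wzG, wzF, wz_coef, wz_cert, rhs_term.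
  replace (S n - 1)%nat with n by lia.
  change (prodC (fun j => natC j * natC j - a * a - 4 * (b * b)) n) with (prodC (pnum a b) n).
  rewrite <- (central_binomial_S n), RtoC_mult, RtoC_cbin_ratio.
  assert (prodC (qden a b) (S n) <> 0) by (apply prodC_neq0; exact hab).
  pose proof (odd_natC_neq0 n).
  assert (RtoC (Binomial.C (2 * S n) (S n)) <> 0)
    by (apply RtoC_neq0; pose proof (central_binomial_pos (S n)); lra).
  assert (natC (S n) <> 0) by (apply RtoC_neq0; rewrite S_INR; pose proof (pos_INR n); lra).
  change (0 + S n)%nat with (S n). change (natC 0) with (RtoC 0).
  change (prodC (qden a b) 0) with (RtoC 1).
  rewrite natC_S in *. field. repeat split; assumption.
Qed.

Lemma wzF_S_n n k :
  wzF a b (S n) k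
  = wzF a b n k * (RtoC (cbin_ratio n) * pnum a b (S n) / qden a b (S (k + S n))).
Proof.
  unfold wzF. rewrite wz_coef_S, (Nat.add_succ_r k (S n)). simpl prodC.
  assert (prodC (qden a b) (k + S n) <> 0) by (apply prodC_neq0; exact hab).
  assert (qden a b (S (k + S n)) <> 0) by (apply hab; lia).
  field. split; assumption.
Qed.

Lemma wzF_S_k n k :
  wzF a b n (S k) = wzF a b n k * (qden a b (S k) / qden a b (S (k + S n))).
Proof.
  unfold wzF. simpl prodC.
  assert (prodC (qden a b) (k + S n) <> 0) by (apply prodC_neq0; exact hab).
  assert (qden a b (S (k + S n)) <> 0) by (apply hab; lia).
  field. split; assumption.
Qed.

Lemma wz_pair n k :
  wzF a b n k - wzF a b (S n) k = wzG a b n k - wzG a b n (S k).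
Proof.
  unfold wzG. rewrite wzF_S_n, wzF_S_k, RtoC_cbin_ratio. unfold wz_cert.
  assert (HQ : qden a b (S (k + S n)) <> 0) by (apply hab; lia).
  pose proof (odd_natC_neq0 n) as Hd.
  transitivity (wzF a b n k
    * ((2 * (2 * natC n + 1) * qden a b (S (k + S n)) - natC (S n) * pnum a b (S n))
       / (2 * (2 * natC n + 1) * qden a b (S (k + S n))))).
  { field. split; assumption. }
  rewrite wz_certificate. field. split; assumption.
Qed.

Lemma wz_partial_sums N K :
  sum_n (wzF a b 0) K - sum_n (wzF a b (S N)) K
  = sum_n (fun m => wzG a b m 0) N - sum_n (fun m => wzG a b m (S K)) N :> C.
Proof.
  assert (Hstep : forall m, sum_n (wzF a b m) K - sum_n (wzF a b (S m)) K
                            = wzG a b m 0 - wzG a b m (S K)).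
  { intros m. rewrite <- sum_n_Cminus.
    rewrite (sum_n_ext _ (fun k => wzG a b m k - wzG a b m (S k))) by (intros; apply wz_pair).
    exact (sum_n_telescope (wzG a b m) K). }
  rewrite <- (sum_n_Cminus (fun m => wzG a b m 0)), <- (sum_n_ext _ _ N Hstep).
  symmetry. exact (sum_n_telescope (fun m => sum_n (wzF a b m) K) N).
Qed.

Lemma rhs_sub_lhs_partial_sums K :
  sum_n (fun n => rhs_term a b (S n)) K - sum_n (fun n => lhs_term a b (S n)) K
  = sum_n (fun m => wzG a b m (S K)) K - sum_n (wzF a b (S K)) K :> C.
Proof.
  pose proof (wz_partial_sums K K) as E.
  rewrite (sum_n_ext _ _ K wzF_0), (sum_n_ext _ _ K wzG_0) in E.
  transitivity (sum_n (fun m => wzG a b m (S K)) K - sum_n (wzF a b (S K)) K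
    + ((sum_n (fun n => rhs_term a b (S n)) K - sum_n (fun m => wzG a b m (S K)) K)
       - (sum_n (fun n => lhs_term a b (S n)) K - sum_n (wzF a b (S K)) K))); [ring|].
  rewrite E. ring.
Qed.

End WZPair.

Definition qden_threshold (a b : C) : R :=
  2 * Cmod a + Cmod a ^ 2 + 6 * Cmod b ^ 2 + 2.

Section Estimates.
Variables a b : C.
Hypothesis hab : forall j : nat, (1 <= j)%nat -> qden a b j <> 0.
Local Open Scope R_scope.

Lemma Cmod_qden_ge i : INR i ^ 2 - Cmod a * INR i - Cmod b ^ 2 <= Cmod (qden a b i).
Proof.
  unfold qden. replace (natC i * natC i - a * natC i - b * b)%C
    with (natC i * natC i - (a * natC i + b * b))%C by ring.
  eapply Rle_trans; [|apply Cmod_sub_ge].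
  pose proof (Cmod_triangle (a * natC i) (b * b)) as H.
  rewrite !Cmod_mult, Cmod_natC in *. simpl. lra.
Qed.

Lemma Cmod_pnum_le j : Cmod (pnum a b j) <= INR j ^ 2 + Cmod a ^ 2 + 4 * Cmod b ^ 2.
Proof.
  unfold pnum. replace (natC j * natC j - a * a - 4 * (b * b))%C
    with (natC j * natC j - (a * a + 4 * (b * b)))%C by ring.
  eapply Rle_trans; [apply Cmod_sub_le|].
  pose proof (Cmod_triangle (a * a) (4 * (b * b))) as H.
  rewrite !Cmod_mult, Cmod_natC in *. rewrite Cmod_R, Rabs_pos_eq in H by lra.
  simpl. lra.
Qed.

Lemma Cmod_qden_large i : qden_threshold a b <= INR i ->
  INR i ^ 2 + Cmod a ^ 2 + 4 * Cmod b ^ 2 <= 2 * Cmod (qden a b i).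
Proof.
  intros Hi. pose proof (Cmod_qden_ge i).
  pose proof (Cmod_ge_0 a). pose proof (Cmod_ge_0 b).
  unfold qden_threshold in Hi.
  assert (INR i * INR i >= (2 * Cmod a + Cmod a ^ 2 + 6 * Cmod b ^ 2 + 2) * INR i) by nra.
  nra.
Qed.

Lemma qden_lower_bound : exists m, 0 < m /\
  forall i, (1 <= i)%nat -> m * (INR i * INR (S i)) <= Cmod (qden a b i).
Proof.
  destruct (INR_unbounded (qden_threshold a b)) as [J HJ].
  destruct (pos_lower_bound_of_eventually
              (fun i => Cmod (qden a b i) / (INR i * INR (S i))) J (1 / 4))
    as [m [Hm Hmf]].
  - lra.
  - intros i Hi. apply le_INR in Hi. simpl in Hi. rewrite S_INR.
    apply Rdiv_lt_0_compat; [apply Cmod_gt_0, hab, INR_le; simpl |]; nra.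
  - intros i Hi. apply le_INR in Hi. rewrite S_INR.
    pose proof (Cmod_qden_large i ltac:(lra)).
    pose proof (Cmod_ge_0 a). pose proof (Cmod_ge_0 b).
    assert (2 <= INR i) by (unfold qden_threshold in HJ; nra).
    apply (Rmult_le_reg_r (INR i * (INR i + 1))); [nra|].
    replace (Cmod (qden a b i) / (INR i * (INR i + 1)) * (INR i * (INR i + 1)))
      with (Cmod (qden a b i)) by (field; nra).
    nra.
  - exists m. split; [exact Hm|]. intros i Hi.
    specialize (Hmf i Hi). apply le_INR in Hi. simpl in Hi.
    assert (0 < INR i * INR (S i)) by (rewrite S_INR; nra).
    apply (Rmult_le_compat_r (INR i * INR (S i))) in Hmf; [|lra].
    replace (Cmod (qden a b i) / (INR i * INR (S i)) * (INR i * INR (S i)))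
      with (Cmod (qden a b i)) in Hmf by (field; rewrite S_INR; split; lra).
    exact Hmf.
Qed.

Lemma Cmod_wzF_S n k : Cmod (wzF a b (S n) k)
  = cbin_ratio n * Cmod (pnum a b (S n)) / Cmod (qden a b (S (k + S n)))
    * Cmod (wzF a b n k).
Proof.
  rewrite (wzF_S_n a b hab), Cmod_mult, Cmod_div, Cmod_mult, Cmod_R, Rabs_pos_eq.
  - ring.
  - apply Rlt_le, cbin_ratio_pos.
  - apply hab. lia.
Qed.

Lemma Cmod_wzF_S_le_large n k : qden_threshold a b <= INR n ->
  Cmod (wzF a b (S n) k) <= 2 / 3 * Cmod (wzF a b n k).
Proof.
  intros Hn. rewrite Cmod_wzF_S.
  pose proof (Cmod_ge_0 a). pose proof (Cmod_ge_0 b).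
  assert (Hn2 : 2 <= INR n) by (unfold qden_threshold in Hn; nra).
  assert (Hi : INR (S n) <= INR (S (k + S n))) by (apply le_INR; lia).
  pose proof (Cmod_qden_large (S (k + S n)) ltac:(rewrite !S_INR in *; lra)) as Hq.
  pose proof (Cmod_pnum_le (S n)) as Hp.
  pose proof (cbin_ratio_le_third n ltac:(apply INR_le; simpl; lra)).
  pose proof (cbin_ratio_pos n).
  assert (HQ : 0 < Cmod (qden a b (S (k + S n)))) by (apply Cmod_gt_0, hab; lia).
  apply Rmult_le_compat_r; [apply Cmod_ge_0|].
  apply (Rmult_le_reg_r (Cmod (qden a b (S (k + S n))))); [exact HQ|].
  unfold Rdiv. rewrite Rmult_assoc, Rinv_l by lra.
  pose proof (pos_INR (S n)). pose proof (Cmod_ge_0 (pnum a b (S n))).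
  assert (INR (S n) ^ 2 <= INR (S (k + S n)) ^ 2) by (apply pow_incr; lra).
  nra.
Qed.

Lemma Cmod_wzF_S_le m n k : 0 < m ->
  (forall i, (1 <= i)%nat -> m * (INR i * INR (S i)) <= Cmod (qden a b i)) ->
  Cmod (wzF a b (S n) k)
  <= (INR (S n) ^ 2 + Cmod a ^ 2 + 4 * Cmod b ^ 2) / (2 * m) * Cmod (wzF a b n k).
Proof.
  intros Hm Hq. rewrite Cmod_wzF_S.
  assert (HQ : m <= Cmod (qden a b (S (k + S n)))).
  { eapply Rle_trans; [|apply Hq; lia].
    pose proof (pos_INR (k + S n)). rewrite !S_INR. nra. }
  pose proof (Cmod_pnum_le (S n)) as Hp. pose proof (Cmod_ge_0 (pnum a b (S n))).
  pose proof (cbin_ratio_le_half n). pose proof (cbin_ratio_pos n).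
  apply Rmult_le_compat_r; [apply Cmod_ge_0|].
  unfold Rdiv. rewrite Rinv_mult.
  apply Rle_trans with (cbin_ratio n * Cmod (pnum a b (S n)) * / m).
  - apply Rmult_le_compat_l; [nra|]. apply Rinv_le_contravar; lra.
  - rewrite <- Rmult_assoc. pose proof (Rinv_0_lt_compat m Hm).
    apply Rmult_le_compat_r; [lra|]. nra.
Qed.

Lemma Cmod_wzF_le_geometric : exists D, 0 <= D /\
  forall n k, Cmod (wzF a b n k) <= D * (2 / 3) ^ n * Cmod (lhs_term a b (S k)).
Proof.
  destruct (INR_unbounded (qden_threshold a b)) as [J HJ].
  destruct qden_lower_bound as [m [Hm Hq]].
  set (M := Rmax (2 / 3) ((INR J ^ 2 + Cmod a ^ 2 + 4 * Cmod b ^ 2) / (2 * m))).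
  assert (HM : 2 / 3 <= M) by apply Rmax_l.
  exists ((M / (2 / 3)) ^ J). split.
  { apply pow_le. unfold Rdiv. apply Rmult_le_pos; lra. }
  intros n k. rewrite <- (wzF_0 a b hab).
  apply (geometric_decay_after (fun n => Cmod (wzF a b n k)));
    [lra | exact HM | intros; apply Cmod_ge_0 | |].
  - intros n' Hn'. eapply Rle_trans; [apply (Cmod_wzF_S_le m n' k Hm Hq)|].
    apply Rmult_le_compat_r; [apply Cmod_ge_0|].
    eapply Rle_trans; [|apply Rmax_r].
    apply Rmult_le_compat_r; [apply Rlt_le, Rinv_0_lt_compat; lra|].
    assert (INR (S n') <= INR J) by (apply le_INR; lia).
    pose proof (pos_INR (S n')).
    assert (INR (S n') ^ 2 <= INR J ^ 2) by (apply pow_incr; lra). lra.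
  - intros n' Hn'. apply Cmod_wzF_S_le_large.
    apply le_INR in Hn'. lra.
Qed.

Lemma Cmod_lhs_term_le : exists c, 0 <= c /\
  forall k, Cmod (lhs_term a b (S k)) <= c / (INR (S k) * INR (S (S k))).
Proof.
  destruct qden_lower_bound as [m [Hm Hq]].
  exists (/ m). split; [apply Rlt_le, Rinv_0_lt_compat, Hm|]. intros k.
  unfold lhs_term. rewrite Cmod_inv by (apply hab; lia).
  assert (0 < INR (S k) * INR (S (S k)))
    by (apply Rmult_lt_0_compat; apply lt_0_INR; lia).
  unfold Rdiv. rewrite <- Rinv_mult. apply Rinv_le_contravar; [nra|].
  apply Hq. lia.
Qed.

Lemma ex_series_lhs : ex_series (fun n => lhs_term a b (S n)).
Proof.
  destruct Cmod_lhs_term_le as [c [Hc Hlhs]].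
  apply (ex_series_le (V := C_CompleteNormedModule))
    with (b := fun k => c * (/ INR (S k) - / INR (S (S k)))).
  - intros k. rewrite <- inv_succ_gap. apply Hlhs.
  - exists (c * 1).
    apply (is_series_scal_l (V := R_NormedModule) c), is_series_inv_succ_gap.
Qed.

Lemma Cmod_wz_cert_le n k : (n <= k)%nat ->
  Cmod (wz_cert a n k) <= (5 + Cmod a) * INR (S k) / 2.
Proof.
  intros Hnk. unfold wz_cert.
  replace (2 * natC k + 3 * natC n + 3 - a)%C
    with (RtoC (2 * INR k + 3 * INR n + 3) - a)%C
    by (unfold natC; rewrite !RtoC_plus, !RtoC_mult; reflexivity).
  replace (2 * (2 * natC n + 1))%C with (RtoC (2 * (2 * INR n + 1)))
    by (unfold natC; rewrite RtoC_mult, RtoC_plus, RtoC_mult; reflexivity).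
  pose proof (pos_INR n). apply le_INR in Hnk. pose proof (Cmod_ge_0 a).
  rewrite Cmod_div by (apply RtoC_neq0; lra).
  rewrite Cmod_R, (Rabs_pos_eq (2 * (2 * INR n + 1))) by lra.
  pose proof (Cmod_sub_le (RtoC (2 * INR k + 3 * INR n + 3)) a) as Hnum.
  rewrite Cmod_R, Rabs_pos_eq in Hnum by lra.
  rewrite S_INR. apply (Rmult_le_reg_r (2 * (2 * INR n + 1))); [lra|].
  replace ((5 + Cmod a) * (INR k + 1) / 2 * (2 * (2 * INR n + 1)))
    with ((5 + Cmod a) * (INR k + 1) * (2 * INR n + 1)) by field.
  unfold Rdiv. rewrite Rmult_assoc, Rinv_l, Rmult_1_r by lra.
  assert (0 <= (5 + Cmod a) * (INR k + 1) * INR n) by (apply Rmult_le_pos; nra).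
  nra.
Qed.

Lemma Cmod_wzG_tail_le : exists c1,
  forall K, Cmod (sum_n (fun m => wzG a b m (S K)) K) <= c1 * / INR (S K).
Proof.
  destruct Cmod_wzF_le_geometric as [D [HD HF]].
  destruct Cmod_lhs_term_le as [c [Hc Hlhs]].
  pose proof (Cmod_ge_0 a).
  set (W := D * c * (5 + Cmod a) / 2).
  assert (HW : 0 <= W) by (unfold W; apply Rmult_le_pos; [apply Rmult_le_pos|]; nra).
  exists (W / (1 - 2 / 3)). intros K.
  eapply Rle_trans;
    [apply (Cmod_sum_n_le _ (fun m => (2 / 3) ^ m * (W * / INR (S K))))|].
  - intros m Hm. unfold wzG. rewrite Cmod_mult.
    pose proof (pow_le (2 / 3) m ltac:(lra)).
    apply Rle_trans with (D * (2 / 3) ^ m * (c / (INR (S (S K)) * INR (S (S (S K)))))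
                          * ((5 + Cmod a) * INR (S (S K)) / 2)).
    + apply Rmult_le_compat; [apply Cmod_ge_0 | apply Cmod_ge_0 | |].
      * eapply Rle_trans; [apply HF|].
        apply Rmult_le_compat_l; [apply Rmult_le_pos; lra | apply Hlhs].
      * apply Cmod_wz_cert_le. lia.
    + rewrite !S_INR. pose proof (pos_INR K).
      apply Rle_trans with ((2 / 3) ^ m * (W * / (INR K + 1 + 1 + 1))).
      * right. unfold W. field. lra.
      * apply Rmult_le_compat_l; [lra|]. apply Rmult_le_compat_l; [exact HW|].
        apply Rinv_le_contravar; lra.
  - replace (W / (1 - 2 / 3) * / INR (S K)) with (W * / INR (S K) / (1 - 2 / 3))
      by (unfold Rdiv; ring).
    apply sum_n_geom_le; [lra|]. apply Rmult_le_pos; [exact HW|].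
    apply Rlt_le, Rinv_0_lt_compat, lt_0_INR. lia.
Qed.

Lemma Cmod_wzF_tail_le : exists c2,
  forall K, Cmod (sum_n (wzF a b (S K)) K) <= c2 * (2 / 3) ^ (S K).
Proof.
  destruct Cmod_wzF_le_geometric as [D [HD HF]].
  destruct Cmod_lhs_term_le as [c [Hc Hlhs]].
  exists (D * c). intros K.
  pose proof (pow_le (2 / 3) (S K) ltac:(lra)).
  eapply Rle_trans; [apply (Cmod_sum_n_le _
    (fun i => D * (2 / 3) ^ (S K) * c * (/ INR (S i) - / INR (S (S i)))))|].
  - intros i _. eapply Rle_trans; [apply HF|].
    replace (D * (2 / 3) ^ S K * c * (/ INR (S i) - / INR (S (S i))))
      with (D * (2 / 3) ^ S K * (c / (INR (S i) * INR (S (S i)))))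
      by (unfold Rdiv; rewrite inv_succ_gap; ring).
    apply Rmult_le_compat_l; [apply Rmult_le_pos; lra | apply Hlhs].
  - transitivity (D * (2 / 3) ^ (S K) * c
                  * sum_n (fun i => / INR (S i) - / INR (S (S i))) K).
    { exact (Req_le _ _ (sum_n_mult_l _ _ K)). }
    rewrite sum_n_inv_succ_gap.
    assert (0 <= / INR (S (S K))) by (apply Rlt_le, Rinv_0_lt_compat, lt_0_INR; lia).
    assert (0 <= D * (2 / 3) ^ S K * c) by (apply Rmult_le_pos; [apply Rmult_le_pos|]; lra).
    nra.
Qed.

End Estimates.

Theorem mainTheorem1 (a b : C)
  (hab : forall j : nat, (1 <= j)%nat -> qden a b j <> 0) :
  exists l : C,
    is_series (fun n : nat => lhs_term a b (S n)) l /\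
    is_series (fun n : nat => rhs_term a b (S n)) l.
Proof.
  destruct (ex_series_lhs a b hab) as [l Hl].
  exists l. split; [exact Hl|].
  destruct (Cmod_wzG_tail_le a b hab) as [c1 H1].
  destruct (Cmod_wzF_tail_le a b hab) as [c2 H2].
  apply (filterlim_C_of_dist_le _ _ l
           (fun K => c1 * / INR (S K) + c2 * (2 / 3) ^ (S K))%R Hl).
  - intros K. rewrite (rhs_sub_lhs_partial_sums a b hab).
    eapply Rle_trans; [apply Cmod_sub_le|]. apply Rplus_le_compat; [apply H1 | apply H2].
  - replace (Finite 0) with (Finite (c1 * 0 + c2 * 0)) by (f_equal; ring).
    apply is_lim_seq_plus'; apply (is_lim_seq_scal_l _ _ (Finite 0)).
    + apply is_lim_seq_inv_INR_S.
    + apply (is_lim_seq_incr_1 (fun n => (2 / 3) ^ n)%R), is_lim_seq_geom.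
      rewrite Rabs_pos_eq; lra.
Qed.
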